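(* $\mathbf{M}$ is a lower triangular square matrix with $M_{i,i}=1$ for all $i\in[0,2^{m}-1]$. Thus $\mathbf{M}$ is invertible over $\mathbb{F}_2$.
   Context: Let $m\ge1$, $N=2^m$, $\mathbf{R}_m=\mathbb{F}_2[x_0,\dots,x_{m-1}]/(x_0^2-x_0,\dots,x_{m-1}^2-x_{m-1})$, and $\operatorname{ev}(Q)$ the evaluation vector of $Q\in\mathbf{R}_m$ at all points of $\mathbb{F}_2^m$. Let $\boldsymbol{G}_N=\begin{pmatrix}1&0\\1&1\end{pmatrix}^{\otimes m}$; row $i$ of $\boldsymbol{G}_N$ is $\operatorname{ev}$ of the monomial $x_0^{b_0}\cdots x_{m-1}^{b_{m-1}}$ with $(b_0,\dots,b_{m-1})$ the binary expansion of $2^m-1-i$. Let $\mathbf{P}\in\mathbb{F}_2^{N\times N}$ be upper triangular with ones on the diagonal (defining an upper polynomial polar code spanned by selected rows of $\mathbf{P}\boldsymbol{G}_N$). For a monomial $h$, $\check{h}=x_0\cdots x_{m-1}/h$ is its multiplicative complement; $f\mid g$ means the set of variables of $f$ is contained in that of $g$; $\operatorname{terms}(Q)$ is the set of monomials appearing in $Q$. The matrix $\mathbf{M}$ is defined by $M_{i,j}=|\{g\in\operatorname{terms}(P_j)\mid \check{g}\mid \check{f}\}| \pmod 2$, where $\operatorname{ev}(P_j)$ is row $j$ of $\mathbf{P}\boldsymbol{G}_N$ and $\operatorname{ev}(f)$ is row $i$ of $\boldsymbol{G}_N$. *)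

From mathcomp Require Import all_boot all_algebra.
Set Implicit Arguments. Unset Strict Implicit. Unset Printing Implicit Defensive.
Import GRing.Theory.
Local Open Scope ring_scope.

(* A monomial x_0^{b_0} ... x_{m-1}^{b_{m-1}} of R_m is identified with its
   set of variables {l | b_l = 1}.  An element Q of R_m (multilinear, over F_2)
   is identified with its coefficient function on monomials. *)
Definition Rm (m : nat) := {ffun {set 'I_m} -> 'F_2}.

(* the monomial whose evaluation is row i of G_N: exponents = binary
   expansion of 2^m - 1 - i *)
Definition row_mono (m : nat) (i : 'I_(2 ^ m)) : {set 'I_m} :=
  [set l : 'I_m | odd ((2 ^ m - 1 - i) %/ 2 ^ l)].

(* evaluation of a polynomial at a point of F_2^m, and the matrix G_N
   (given for reference; row i of G_N is ev (row_mono i)) *)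
Definition eval_at (m : nat) (Q : Rm m) (x : {set 'I_m}) : 'F_2 :=
  \sum_(g : {set 'I_m}) Q g * (g \subset x)%:R.
Definition G_N (m : nat) : 'M['F_2]_(2 ^ m) :=
  \matrix_(i, j) ((row_mono i) \subset (row_mono j) : bool)%:R.

(* P_j: the polynomial with ev(P_j) = row j of P G_N, i.e.
   P_j = sum_k P_{j,k} * (monomial of row k of G_N) *)
Definition Ppoly (m : nat) (P : 'M['F_2]_(2 ^ m)) (j : 'I_(2 ^ m)) : Rm m :=
  [ffun g => \sum_(k : 'I_(2 ^ m) | row_mono k == g) P j k].

Definition terms (m : nat) (Q : Rm m) : {set {set 'I_m}} := [set g | Q g != 0].

Definition mcompl (m : nat) (h : {set 'I_m}) : {set 'I_m} := ~: h.
Definition mdiv (m : nat) (f g : {set 'I_m}) : bool := f \subset g.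

Definition Mmat (m : nat) (P : 'M['F_2]_(2 ^ m)) : 'M['F_2]_(2 ^ m) :=
  \matrix_(i, j)
    (#|[set g in terms (Ppoly P j) | mdiv (mcompl g) (mcompl (row_mono i))]|)%:R.

From mathcomp Require Import all_boot all_algebra.
From mathcomp Require Import zify.

Set Implicit Arguments.
Unset Strict Implicit.
Unset Printing Implicit Defensive.

Import GRing.Theory.
Local Open Scope ring_scope.

(* The variables of [row_mono i] are the binary digits of [2^m - 1 - i], and
   inclusion of digit sets implies the numerical order, so [row_mono] is a
   bijection that reverses order: [row_mono i \subset row_mono k] forces
   [k <= i].  A term [g = row_mono k] of [P_j] has [j <= k] because [P] is upper
   triangular, and [mdiv (mcompl g) (mcompl (row_mono i))] means
   [row_mono i \subset g], i.e. [k <= i].  Hence [M i j] vanishes for [i < j],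
   and [M i i] counts the single term [row_mono i] of [P_i], with coefficient
   [P i i = 1]. *)

Lemma leq_of_bits_subset (m a b : nat) : (a < 2 ^ m)%N -> (b < 2 ^ m)%N ->
  (forall l, (l < m)%N -> odd (a %/ 2 ^ l) -> odd (b %/ 2 ^ l)) -> (a <= b)%N.
Proof.
elim: m a b => [|m IH] a b; first by rewrite expn0 !ltnS !leqn0 => /eqP-> /eqP->.
rewrite expnS => a_lt b_lt bits_ab.
have half_le : (a./2 <= b./2)%N.
  apply: IH; rewrite ?ltn_half_double -?muln2 1?mulnC //.
  by move=> l l_lt; rewrite -!divn2 -!divnMA -!expnS; apply: bits_ab.
have odd_ab : odd a -> odd b by have := bits_ab 0%N isT; rewrite expn0 !divn1.
rewrite -(odd_double_half a) -(odd_double_half b).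
by case: (odd a) odd_ab => [/(_ isT)-> | _] /=; lia.
Qed.

Lemma leq_of_row_mono_subset (m : nat) (i k : 'I_(2 ^ m)) :
  row_mono i \subset row_mono k -> (k <= i)%N.
Proof.
move/subsetP=> sub_ik.
have := ltn_ord i; have := ltn_ord k => k_lt i_lt.
suff : (2 ^ m - 1 - i <= 2 ^ m - 1 - k)%N by lia.
apply: (@leq_of_bits_subset m); [lia | lia |].
by move=> l l_lt; have := sub_ik (Ordinal l_lt); rewrite !inE.
Qed.

Lemma row_mono_inj (m : nat) : injective (@row_mono m).
Proof.
move=> i k eq_ik; apply/val_inj/eqP.
by rewrite eqn_leq !leq_of_row_mono_subset // eq_ik.
Qed.

Lemma row_mono_onto (m : nat) (g : {set 'I_m}) : g \in codom (@row_mono m).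
Proof.
apply: (inj_card_onto (@row_mono_inj m)).
by rewrite -cardsT -powersetT card_powerset cardsT !card_ord.
Qed.

Lemma Ppoly_row_mono (m : nat) (P : 'M['F_2]_(2 ^ m)) (j k : 'I_(2 ^ m)) :
  Ppoly P j (row_mono k) = P j k.
Proof.
rewrite ffunE (big_pred1 k) // => k' /=.
by apply/eqP/eqP => [/row_mono_inj | ->].
Qed.

Lemma mdiv_mcompl (m : nat) (f g : {set 'I_m}) :
  mdiv (mcompl f) (mcompl g) = (g \subset f).
Proof. exact: setCS. Qed.

Lemma trig_mx_unit (R : comUnitRingType) (n : nat) (A : 'M[R]_n) :
  is_trig_mx A -> (forall i, A i i = 1) -> A \in unitmx.
Proof.
move=> trigA diagA; rewrite unitmxE det_trig //.
by rewrite big1 => [|i _]; [exact: unitr1 | exact: diagA].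
Qed.

Section MmatTriangular.

Variables (m : nat) (P : 'M['F_2]_(2 ^ m)).
Hypothesis Pupper : forall i j : 'I_(2 ^ m), (j < i)%N -> P i j = 0.

Let Mset (i j : 'I_(2 ^ m)) :=
  [set g in terms (Ppoly P j) | mdiv (mcompl g) (mcompl (row_mono i))].

Lemma Mset_row_mono (i j : 'I_(2 ^ m)) g : g \in Mset i j ->
  exists k : 'I_(2 ^ m), [/\ g = row_mono k, (j <= k)%N & (k <= i)%N].
Proof.
have /codomP[k ->] := row_mono_onto g.
rewrite !inE Ppoly_row_mono mdiv_mcompl => /andP[Pjk_nz sub_ik].
exists k; split => //; last exact: leq_of_row_mono_subset.
by rewrite leqNgt; apply: contra Pjk_nz => lt_kj; rewrite Pupper.
Qed.

Lemma Mmat_trig : is_trig_mx (Mmat P).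
Proof.
apply/is_trig_mxP => i j lt_ij; rewrite mxE -/(Mset i j).
suff -> : Mset i j = set0 by rewrite cards0.
apply/setP=> g; rewrite in_set0; apply/negP => /Mset_row_mono[k [_ le_jk le_ki]].
by move: lt_ij; rewrite ltnNge (leq_trans le_jk le_ki).
Qed.

Hypothesis Pdiag : forall i : 'I_(2 ^ m), P i i = 1.

Lemma Mmat_diag (i : 'I_(2 ^ m)) : Mmat P i i = 1.
Proof.
rewrite mxE -/(Mset i i).
suff -> : Mset i i = [set row_mono i] by rewrite cards1.
apply/setP=> g; rewrite in_set1.
apply/idP/eqP => [/Mset_row_mono[k [-> le_ik le_ki]] | ->].
  by congr row_mono; apply/val_inj/eqP; rewrite eqn_leq le_ik le_ki.
by rewrite !inE Ppoly_row_mono Pdiag oner_eq0 mdiv_mcompl subxx.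
Qed.

End MmatTriangular.

Theorem lemma7 (m : nat) (hm : (1 <= m)%N) (P : 'M['F_2]_(2 ^ m))
  (Pupper : forall i j : 'I_(2 ^ m), (j < i)%N -> P i j = 0)
  (Pdiag : forall i : 'I_(2 ^ m), P i i = 1) :
  (forall i j : 'I_(2 ^ m), (i < j)%N -> Mmat P i j = 0) /\
  (forall i : 'I_(2 ^ m), Mmat P i i = 1) /\
  Mmat P \in unitmx.
Proof.
have trigM := Mmat_trig Pupper.
have diagM := Mmat_diag Pupper Pdiag.
by split; [apply/is_trig_mxP | split; last exact: trig_mx_unit].
Qed.
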